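(* Let $\mathcal{S}\subseteq\{0,1\}^n$ be comonotone, let $\mathcal{P}=\{x\in\mathbb{R}^n: Mx\le b\}$ with $M\in\mathbb{R}^{m\times n}$, $b\in\mathbb{R}^m$, and let $\mathcal{X}=\mathcal{S}\cap\mathcal{P}$ satisfy $\operatorname{conv}(\mathcal{S}\cap\mathcal{P})=\operatorname{conv}(\mathcal{S})\cap\mathcal{P}$. Then for every $v\in\mathbb{R}^n$ there exists $\gamma\in\mathbb{R}^m_+$ such that, for all $\bar x$: $\bar x\in\arg\max_{x\in\mathcal{X}}v^\top x$ if and only if $$\bar x\in\mathcal{X}\cap\mathcal{P}_=(\gamma)\cap\arg\max_{x\in\mathcal{S}}(v-M^\top\gamma)^\top x,$$ where $\mathcal{P}_=(\gamma)=\{x\in\mathbb{R}^n: (Mx)_i=b_i\ \text{for all } i\in[m]\text{ with }\gamma_i\neq0\}$.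
   Context: $\Pi_n$ is the set of permutations of $[n]$; for $\pi\in\Pi_n$, $\mathcal{Z}(\pi)=\{x\in\mathbb{R}^n: x_{\pi(1)}\ge\cdots\ge x_{\pi(n)}\}$. A set $\mathcal{S}\subseteq\mathbb{R}^n$ is comonotone if there is a map $\Psi:\Pi_n\to\Pi_n$ such that for every $\pi\in\Pi_n$ and every $v\in\mathcal{Z}(\pi)$, whenever $\max_{x\in\mathcal{S}}v^\top x$ attains its optimum, it has an optimal solution in $\mathcal{Z}(\Psi(\pi))$. *)

From HB Require Import structures.
From mathcomp Require Import all_boot all_order all_algebra perm.
From mathcomp Require Import reals.
Set Implicit Arguments. Unset Strict Implicit. Unset Printing Implicit Defensive.
Import Order.TTheory GRing.Theory Num.Theory.
Local Open Scope ring_scope.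

Section Defs.
Variable R : realType.
Variable n : nat.

Definition dotv (u x : 'cV[R]_n) : R := \sum_(i < n) u i 0 * x i 0.

Definition Zcone (pi : {perm 'I_n}) (x : 'cV[R]_n) : Prop :=
  forall i j : 'I_n, (i <= j)%N -> x (pi j) 0 <= x (pi i) 0.

Definition is_argmax (A : 'cV[R]_n -> Prop) (v x : 'cV[R]_n) : Prop :=
  A x /\ forall y, A y -> dotv v y <= dotv v x.

Definition comonotone (S : 'cV[R]_n -> Prop) : Prop :=
  exists Psi : {perm 'I_n} -> {perm 'I_n},
    forall (pi : {perm 'I_n}) (v : 'cV[R]_n), Zcone pi v ->
      (exists x, is_argmax S v x) ->
      exists x, is_argmax S v x /\ Zcone (Psi pi) x.

Definition conv (A : 'cV[R]_n -> Prop) (x : 'cV[R]_n) : Prop :=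
  exists (k : nat) (lam : 'I_k -> R) (pts : 'I_k -> 'cV[R]_n),
    (forall i, 0 <= lam i) /\ \sum_(i < k) lam i = 1 /\
    (forall i, A (pts i)) /\ x = \sum_(i < k) lam i *: pts i.

Definition binary_set (S : 'cV[R]_n -> Prop) : Prop :=
  forall x, S x -> forall i, x i 0 = 0 \/ x i 0 = 1.

Variable m : nat.
Definition polyhedron (M : 'M[R]_(m, n)) (b : 'cV[R]_m) (x : 'cV[R]_n) : Prop :=
  forall i : 'I_m, (M *m x) i 0 <= b i 0.

Definition polyEq (M : 'M[R]_(m, n)) (b : 'cV[R]_m) (g : 'cV[R]_m)
  (x : 'cV[R]_n) : Prop :=
  forall i : 'I_m, g i 0 != 0 -> (M *m x) i 0 = b i 0.
End Defs.

(* Since S is finite, the maximum c of v^T x over X = S ∩ P is attained.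
   The Lagrangian dual asks for gamma >= 0 with v^T s + gamma^T (b - M s) <= c
   for every s in S, a finite linear system in gamma.  If it were infeasible,
   Farkas' lemma (via Fourier-Motzkin elimination) would give a
   nonnegative combination of its constraints reading gamma^T 0 <= c' < 0; such
   a combination describes a point x of conv S with M x <= b and v^T x > c,
   which lies in conv (S ∩ P) by hypothesis, a contradiction.  A dual solution
   certifies optimality, and complementary slackness characterizes the
   maximizers. *)

From HB Require Import structures.
From mathcomp Require Import all_boot all_order all_algebra perm.
From mathcomp Require Import reals boolp.
From mathcomp Require Import ring lra.
Set Implicit Arguments. Unset Strict Implicit. Unset Printing Implicit Defensive.
Import Order.TTheory GRing.Theory Num.Theory.
Local Open Scope ring_scope.

Lemma exists_between (R : realDomainType) (s1 s2 : seq R) :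
  (forall x y, x \in s1 -> y \in s2 -> x <= y) ->
  exists2 t, (forall x, x \in s1 -> x <= t) & (forall y, y \in s2 -> t <= y).
Proof.
elim: s1 => [_|x s1 IH le_s12].
  elim: s2 => [|y s2 [t _ le_t]]; first by exists 0.
  exists (Num.min y t) => // z /predU1P[->|/le_t zt]; by rewrite ge_min ?lexx ?zt ?orbT.
have [|t le_t t_le] := IH => [x' y x's1 ys2|]; first by apply: le_s12; rewrite ?inE ?x's1 ?orbT.
exists (Num.max x t) => [z /predU1P[->|/le_t zt]|y ys2]; first by rewrite le_max lexx.
  by rewrite le_max zt orbT.
by rewrite ge_max t_le // le_s12 ?mem_head.
Qed.

Section Cone.
Variables (R : realFieldType) (V : lmodType R).

Inductive cone (A : V -> Prop) : V -> Prop :=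
| cone_gen p : A p -> cone A p
| coneD p q : cone A p -> cone A q -> cone A (p + q)
| coneZ a p : 0 <= a -> cone A p -> cone A (a *: p).

Lemma cone_sub (A B : V -> Prop) :
  (forall p, A p -> cone B p) -> forall p, cone A p -> cone B p.
Proof.
move=> AB p; elim=> {p} [p /AB //|p q _ Bp _ Bq|a p a_ge0 _ Bp].
  exact: coneD.
exact: coneZ.
Qed.

End Cone.

Section FourierMotzkin.
Variables (R : realFieldType) (N : nat).
(* A pair (a, c) encodes the inequality a^T g <= c on the unknown g; the
   regular module R^o turns such pairs into vectors that can be combined. *)
Local Notation constraint := ('cV[R]_N * R^o)%type.
Implicit Types (d : 'I_N) (g : 'cV[R]_N) (p q : constraint) (l : seq constraint).

Definition slack g p := p.2 - (p.1^T *m g) 0 0.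
Definition sat g p := 0 <= slack g p.

Lemma slackD g p q : slack g (p + q) = slack g p + slack g q.
Proof. by rewrite /slack /= linearD mulmxDl mxE; ring. Qed.

Lemma slackZ g a p : slack g (a *: p) = a * slack g p.
Proof. by rewrite /slack /= linearZ -scalemxAl mxE mulrBr. Qed.

Lemma slack_shift g d t p :
  slack (g + t *: delta_mx d 0) p = slack g p - t * p.1 d 0.
Proof. by rewrite /slack mulmxDr -scalemxAr -colE !mxE; ring. Qed.

Definition fm_comb d p q := (- q.1 d 0) *: p + p.1 d 0 *: q.

Definition fm_elim d l :=
  [seq p : constraint <- l | p.1 d 0 == 0] ++
  [seq fm_comb d p q | p <- [seq p : constraint <- l | 0 < p.1 d 0],
                       q <- [seq q : constraint <- l | q.1 d 0 < 0]].

Lemma fm_elim_cone d l p :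
  p \in fm_elim d l -> cone (fun q => q \in l) p /\ p.1 d 0 = 0.
Proof.
rewrite mem_cat mem_filter => /orP[/andP[/eqP pd pl]|]; first by split=> //; exact: cone_gen.
case/allpairsP=> -[p1 q1] /=; rewrite !mem_filter => -[/andP[p1d p1l] /andP[q1d q1l] ->].
split; last by rewrite /fm_comb /= !mxE mulNr mulrC addNr.
apply: coneD; apply: coneZ; rewrite ?oppr_ge0 ?ltW //; exact: cone_gen.
Qed.

Lemma fm_elim_extend d l g :
  all (sat g) (fm_elim d l) -> exists t, all (sat (g + t *: delta_mx d 0)) l.
Proof.
move=> /allP g_sat; pose r p := slack g p / p.1 d 0.
have [|t lo_t t_up] := @exists_between _ [seq r q | q <- l & q.1 d 0 < 0]
                                         [seq r p | p <- l & 0 < p.1 d 0].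
  move=> _ _ /mapP[q + ->] /mapP[p + ->]; rewrite !mem_filter => /andP[qd ql] /andP[pd pl].
  have : sat g (fm_comb d p q).
    apply: g_sat; rewrite mem_cat; apply/orP; right.
    by apply: allpairs_f; rewrite mem_filter ?pd ?qd.
  rewrite /sat /fm_comb slackD !slackZ /r ler_pdivlMr // mulrAC ler_ndivrMr //; nra.
exists t; apply/allP => p pl; rewrite /sat slack_shift.
case: (ltrgtP (p.1 d 0) 0) => pd.
- have : r p <= t by apply: lo_t; apply: map_f; rewrite mem_filter pd.
  by rewrite /r ler_ndivrMr // subr_ge0 mulrC.
- have : t <= r p by apply: t_up; apply: map_f; rewrite mem_filter pd.
  by rewrite /r ler_pdivlMr // subr_ge0 mulrC.
- by rewrite pd mulr0 subr0; apply: g_sat; rewrite mem_cat mem_filter pd eqxx pl.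
Qed.

Lemma farkas_supported k l :
  (forall p, p \in l -> forall j : 'I_N, (k <= j)%N -> p.1 j 0 = 0) ->
  (forall g, ~~ all (sat g) l) -> exists2 c, c < 0 & cone (fun p => p \in l) (0, c).
Proof.
elim: k l => [|k IH] l l_supp l_infeas.
  have /allPn[p pl] := l_infeas 0.
  rewrite /sat /slack mulmx0 mxE subr0 -ltNge => p2_lt0.
  exists p.2 => //; have -> : (0, p.2) = p.
    case: p pl {p2_lt0} => a c pl; congr pair; apply/matrixP => j i.
    by rewrite ord1 mxE (l_supp _ pl j (leq0n j)).
  exact: cone_gen.
have [kN|Nk] := ltnP k N; last first.
  apply: IH => // p pl j kj; have := ltn_ord j; by rewrite ltnNge (leq_trans Nk kj).
pose d := Ordinal kN.
have [c c_lt0 cone_c] : exists2 c, c < 0 & cone (fun p => p \in fm_elim d l) (0, c).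
  apply: IH => [p /fm_elim_cone[p_cone pd] j|g]; last first.
    by apply/negP => /fm_elim_extend[t]; apply/negP.
  rewrite leq_eqVlt => /orP[/eqP kj|kj]; first by have -> : j = d by apply: val_inj.
  elim: p_cone {pd} => [q /l_supp/(_ j kj) //|q q' _ qj _ q'j|a q _ _ qj] /=;
    by rewrite mxE ?qj ?q'j ?addr0 ?mulr0.
by exists c => //; apply: cone_sub cone_c => p /fm_elim_cone[].
Qed.

Theorem farkas l :
  (forall g, ~~ all (sat g) l) -> exists2 c, c < 0 & cone (fun p => p \in l) (0, c).
Proof. by apply: (@farkas_supported N) => p _ j; rewrite leqNgt ltn_ord. Qed.

End FourierMotzkin.

Lemma mxBE (V : zmodType) p q (A B : 'M[V]_(p, q)) i j : (A - B) i j = A i j - B i j.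
Proof. by rewrite !mxE. Qed.

Section DotProduct.
Variables (R : realType) (n : nat).
Implicit Types (u w x y : 'cV[R]_n).

Lemma dotvE u x : dotv u x = (u^T *m x) 0 0.
Proof. by rewrite /dotv mxE; apply: eq_bigr => i _; rewrite mxE. Qed.

Lemma dotvC u x : dotv u x = dotv x u.
Proof. by apply: eq_bigr => i _; rewrite mulrC. Qed.

Lemma dotvDr u x y : dotv u (x + y) = dotv u x + dotv u y.
Proof. by rewrite !dotvE mulmxDr mxE. Qed.

Lemma dotvZr u a x : dotv u (a *: x) = a * dotv u x.
Proof. by rewrite !dotvE -scalemxAr mxE. Qed.

Lemma dotvBl u w x : dotv (u - w) x = dotv u x - dotv w x.
Proof. by rewrite !dotvE linearB mulmxBl !mxE. Qed.

Lemma dotvNl u x : dotv (- u) x = - dotv u x.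
Proof. by rewrite /dotv -sumrN; apply: eq_bigr => i _; rewrite mxE mulNr. Qed.

Lemma dotv_delta i x : dotv (delta_mx i 0) x = x i 0.
Proof. by rewrite dotvE trmx_delta -rowE mxE. Qed.

Lemma dotvBr u x y : dotv u (x - y) = dotv u x - dotv u y.
Proof. by rewrite ![dotv u _]dotvC dotvBl. Qed.

Lemma dotv_sumr I (r : seq I) (F : I -> 'cV[R]_n) u :
  dotv u (\sum_(i <- r) F i) = \sum_(i <- r) dotv u (F i).
Proof. by rewrite dotvE mulmx_sumr summxE; apply: eq_bigr => i _; rewrite dotvE. Qed.

Lemma dotv_ge0 u x : (forall i, 0 <= u i 0) -> (forall i, 0 <= x i 0) -> 0 <= dotv u x.
Proof. by move=> u_ge0 x_ge0; apply: sumr_ge0 => i _; rewrite mulr_ge0. Qed.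

Lemma dotv_eq0_ge0 u x : (forall i, 0 <= u i 0) -> (forall i, 0 <= x i 0) ->
  dotv u x = 0 -> forall i, u i 0 != 0 -> x i 0 = 0.
Proof.
move=> u_ge0 x_ge0 ux0 i ui0.
have /eqP := psumr_eq0P (fun j _ => mulr_ge0 (u_ge0 j) (x_ge0 j)) ux0 (i := i) isT.
by rewrite mulf_eq0 (negPf ui0) => /eqP.
Qed.

End DotProduct.

Section ConvexHull.
Variables (R : realType) (n : nat).

Lemma conv_gen (A : 'cV[R]_n -> Prop) x : A x -> conv A x.
Proof.
exists 1%N, (fun=> 1), (fun=> x); rewrite !big_ord1 scale1r.
by split=> [i|]; rewrite ?ler01.
Qed.

Lemma conv_convex (A : 'cV[R]_n -> Prop) a x1 x2 : 0 <= a <= 1 ->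
  conv A x1 -> conv A x2 -> conv A (a *: x1 + (1 - a) *: x2).
Proof.
case/andP=> a_ge0 a_le1 [k1 [l1 [p1 [l1_ge0 [l1_sum1 [Ap1 ->]]]]]].
case=> [k2 [l2 [p2 [l2_ge0 [l2_sum1 [Ap2 ->]]]]]].
pose pick T (f1 : 'I_k1 -> T) (f2 : 'I_k2 -> T) i :=
  match split i with inl i1 => f1 i1 | inr i2 => f2 i2 end.
have pickl T f1 f2 i : @pick T f1 f2 (lshift k2 i) = f1 i.
  by rewrite /pick (unsplitK (inl _ i)).
have pickr T f1 f2 i : @pick T f1 f2 (rshift k1 i) = f2 i.
  by rewrite /pick (unsplitK (inr _ i)).
exists (k1 + k2)%N, (pick _ (fun i => a * l1 i) (fun i => (1 - a) * l2 i)), (pick _ p1 p2).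
split; first by move=> i; rewrite /pick; case: split => j; rewrite mulr_ge0 ?subr_ge0.
split; first by rewrite big_split_ord /=; under eq_bigr do rewrite pickl;
  under [X in _ + X]eq_bigr do rewrite pickr; rewrite -!mulr_sumr l1_sum1 l2_sum1; ring.
split; first by move=> i; rewrite /pick; case: split.
rewrite big_split_ord /=; under [X in _ = X + _]eq_bigr do rewrite !pickl;
  under [X in _ = _ + X]eq_bigr do rewrite !pickr.
by rewrite !scaler_sumr; congr (_ + _); apply: eq_bigr => i _; rewrite scalerA.
Qed.

Lemma conv_cone_add (A : 'cV[R]_n -> Prop) t1 t2 x1 x2 : 0 <= t1 -> 0 <= t2 ->
  conv A x1 -> conv A x2 -> exists2 x, conv A x & t1 *: x1 + t2 *: x2 = (t1 + t2) *: x.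
Proof.
move=> t1_ge0 t2_ge0 Ax1 Ax2; have [t_eq0|t_neq0] := eqVneq (t1 + t2) 0.
  have [-> ->] : t1 = 0 /\ t2 = 0 by split; lra.
  by exists x1; rewrite // addr0 !scale0r addr0.
exists ((t1 / (t1 + t2)) *: x1 + (1 - t1 / (t1 + t2)) *: x2).
  apply: conv_convex => //; rewrite divr_ge0 ?addr_ge0 //=.
  by rewrite ler_pdivrMr ?mul1r ?lerDl // lt_def t_neq0 addr_ge0.
have -> : 1 - t1 / (t1 + t2) = t2 / (t1 + t2) by field.
by rewrite scalerDr !scalerA !(mulrC (t1 + t2)) !divfK.
Qed.

Lemma conv_dotv_le (A : 'cV[R]_n -> Prop) u c x :
  (forall y, A y -> dotv u y <= c) -> conv A x -> dotv u x <= c.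
Proof.
move=> Au_le [k [l [p [l_ge0 [l_sum1 [Ap ->]]]]]].
rewrite dotv_sumr -[c]mul1r -l_sum1 mulr_suml; apply: ler_sum => i _.
by rewrite dotvZr ler_wpM2l ?Au_le.
Qed.

End ConvexHull.

Lemma dotv_mulmx (R : realType) m n (A : 'M[R]_(m, n)) (g : 'cV[R]_m) (x : 'cV[R]_n) :
  dotv (A^T *m g) x = dotv g (A *m x).
Proof. by rewrite !dotvE trmx_mul trmxK -mulmxA. Qed.

Section FiniteSets.
Variables (R : realType) (n : nat).

Definition binary_vectors : seq 'cV[R]_n :=
  [seq \col_i (f i)%:R | f : {ffun 'I_n -> bool}].

Lemma binary_vectors_mem (S : 'cV[R]_n -> Prop) x :
  binary_set S -> S x -> x \in binary_vectors.
Proof.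
move=> binS Sx; apply/mapP; exists [ffun i => x i 0 == 1]; first by rewrite mem_enum.
apply/matrixP => i j; rewrite ord1 !mxE ffunE.
by case: (binS x Sx i) => ->; rewrite ?eqxx // eq_sym oner_eq0.
Qed.

Lemma finite_argmax (A : 'cV[R]_n -> Prop) (s : seq 'cV[R]_n) u x0 :
  (forall x, A x -> x \in s) -> A x0 -> exists x, is_argmax A u x.
Proof.
move=> As Ax0; pose y (i : 'I_(size s)) := nth 0 s i.
have s_index x : A x -> (index x s < size s)%N by move/As; rewrite index_mem.
have Pi0 : `[< A (y (Ordinal (s_index _ Ax0))) >] by apply/asboolP; rewrite /y nth_index ?As.
have [i /asboolP Ayi yi_max] :=
  arg_maxP (P := fun i => `[< A (y i) >]) (fun i => dotv u (y i)) Pi0.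
exists (y i); split=> // x Ax; rewrite -(nth_index 0 (As _ Ax)).
by apply: (yi_max (Ordinal (s_index _ Ax))); apply/asboolP; rewrite /y nth_index ?As.
Qed.

End FiniteSets.

Section LagrangianDuality.
Variables (R : realType) (n m : nat) (S : 'cV[R]_n -> Prop).
Variables (M : 'M[R]_(m, n)) (b : 'cV[R]_m) (v : 'cV[R]_n).
Local Notation X := (fun y => S y /\ polyhedron M b y).
Implicit Types (x y : 'cV[R]_n) (g : 'cV[R]_m).

Lemma polyhedronE x : polyhedron M b x <-> forall i, 0 <= (b - M *m x) i 0.
Proof. by split=> Px i; move: (Px i); rewrite mxBE subr_ge0. Qed.

Lemma dotv_lagrangian g x :
  dotv (v - M^T *m g) x = dotv v x + dotv g (b - M *m x) - dotv g b.
Proof. by rewrite dotvBl dotv_mulmx dotvBr; ring. Qed.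

Lemma polyEq_dotv g x : polyEq M b g x -> dotv g (b - M *m x) = 0.
Proof.
move=> gx; apply: big1 => i _; rewrite mxBE.
by have [->|/gx ->] := eqVneq (g i 0) 0; rewrite ?mul0r ?subrr ?mulr0.
Qed.

Lemma lagrangian_argmax_sufficient g x : (forall i, 0 <= g i 0) ->
  X x -> polyEq M b g x -> is_argmax S (v - M^T *m g) x -> is_argmax X v x.
Proof.
move=> g_ge0 Xx gx [_ x_max]; split=> // y [Sy /polyhedronE Py].
have := x_max y Sy; rewrite !dotv_lagrangian (polyEq_dotv gx).
have := dotv_ge0 g_ge0 Py; lra.
Qed.

Lemma lagrangian_argmax_necessary g x : (forall i, 0 <= g i 0) ->
  (forall s, S s -> dotv v s + dotv g (b - M *m s) <= dotv v x) ->
  X x -> polyEq M b g x /\ is_argmax S (v - M^T *m g) x.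
Proof.
move=> g_ge0 g_dual [Sx /polyhedronE Px].
have gx0 : dotv g (b - M *m x) = 0.
  by apply/le_anti; rewrite dotv_ge0 // andbT; have := g_dual x Sx; lra.
split=> [i /(dotv_eq0_ge0 g_ge0 Px gx0)|]; first by rewrite mxBE => /subr0_eq.
by split=> // y Sy; rewrite !dotv_lagrangian gx0; have := g_dual y Sy; lra.
Qed.

Definition dual_constraint c x : 'cV[R]_m * R^o := (b - M *m x, c - dotv v x).
Definition sign_constraint (i : 'I_m) : 'cV[R]_m * R^o := (- delta_mx i 0, 0).

Lemma dual_constraint_affine c t1 t2 x1 x2 x : t1 *: x1 + t2 *: x2 = (t1 + t2) *: x ->
  t1 *: dual_constraint c x1 + t2 *: dual_constraint c x2 = (t1 + t2) *: dual_constraint c x.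
Proof.
move=> Ex; congr pair => /=.
  by rewrite !scalerBr scalerDl !scalemxAr -Ex mulmxDr opprD addrACA.
have := congr1 (dotv v) Ex; rewrite dotvDr !dotvZr.
by rewrite /GRing.scale /=; lra.
Qed.

Variable sS : seq 'cV[R]_n.
Hypothesis memS : forall x, S x <-> x \in sS.

Definition lagrangian_system c :=
  [seq dual_constraint c s | s <- sS] ++ [seq sign_constraint i | i <- enum 'I_m].

Lemma lagrangian_system_sat c g : all (sat g) (lagrangian_system c) ->
  (forall i, 0 <= g i 0) /\ (forall s, S s -> dotv v s + dotv g (b - M *m s) <= c).
Proof.
rewrite all_cat => /andP[/allP sat_dual /allP sat_sign]; split=> [i|s /memS Ss].
  have := sat_sign _ (map_f _ (mem_enum _ i)); rewrite /sat /slack /=.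
  by rewrite -dotvE dotvNl dotv_delta sub0r opprK.
by have := sat_dual _ (map_f _ Ss); rewrite /sat /slack /= -dotvE [dotv (b - _) _]dotvC; lra.
Qed.

Lemma lagrangian_system_cone c x0 p : S x0 ->
  cone (fun q => q \in lagrangian_system c) p ->
  exists t x (w : 'cV[R]_m), [/\ 0 <= t, conv S x, forall i, 0 <= w i 0 &
                                p = t *: dual_constraint c x - (w, 0 : R^o)].
Proof.
move=> Sx0; elim=> {p} [p|p q _ [t1 [x1 [w1 [t1_ge0 Sx1 w1_ge0 ->]]]]
                         _ [t2 [x2 [w2 [t2_ge0 Sx2 w2_ge0 ->]]]]
                       |a p a_ge0 _ [t [x [w [t_ge0 Sx w_ge0 ->]]]]].
- rewrite mem_cat => /orP[/mapP[s /memS Ss ->]|/mapP[i _ ->]].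
    exists 1, s, 0.
    split; [exact: ler01 | exact: conv_gen | by move=> i; rewrite mxE |].
    by rewrite scale1r; congr pair => /=; rewrite subr0.
  exists 0, x0, (delta_mx i 0).
  split; [by [] | exact: conv_gen | by move=> j; rewrite mxE |].
  by rewrite scale0r; congr pair => /=; rewrite sub0r ?oppr0.
- have [x Sx Ex] := conv_cone_add t1_ge0 t2_ge0 Sx1 Sx2.
  exists (t1 + t2), x, (w1 + w2).
  split; [exact: addr_ge0 | by [] | by move=> i; rewrite mxE addr_ge0 |].
  rewrite addrACA -opprD -(dual_constraint_affine c Ex).
  by congr pair => /=; rewrite addr0.
- exists (a * t), x, (a *: w).
  split; [exact: mulr_ge0 | by [] | by move=> i; rewrite mxE mulr_ge0 |].
  by rewrite scalerBr scalerA; congr pair => /=; rewrite scaler0.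
Qed.

Lemma lagrangian_system_cone_ge0 c x0 c' :
  (forall x, conv S x -> polyhedron M b x -> conv X x) ->
  (forall y, X y -> dotv v y <= c) -> S x0 ->
  cone (fun q => q \in lagrangian_system c) (0, c') -> 0 <= c'.
Proof.
move=> convSP c_ub Sx0 /(lagrangian_system_cone Sx0)[t [x [w [t_ge0 Sx w_ge0 []]]]].
move=> /(congr1 (fun A : 'cV_m => A^~ 0)) E1 ->; rewrite subr0.
have [<-|t_neq0] := eqVneq 0 t; first by rewrite scale0r.
have t_gt0 : 0 < t by rewrite lt_def eq_sym t_neq0.
have Px : polyhedron M b x.
  apply/polyhedronE => i; rewrite -(pmulr_rge0 _ t_gt0).
  have := congr1 (fun f => f i) E1; rewrite /= mxBE mxE mxE.
  by have := w_ge0 i; lra.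
have := conv_dotv_le c_ub (convSP x Sx Px).
by move=> vx_le; apply: mulr_ge0; rewrite ?subr_ge0.
Qed.

Lemma lagrangian_dual_feasible c x0 :
  (forall x, conv S x -> polyhedron M b x -> conv X x) ->
  (forall y, X y -> dotv v y <= c) -> S x0 ->
  exists2 g : 'cV[R]_m, (forall i, 0 <= g i 0) &
    forall s, S s -> dotv v s + dotv g (b - M *m s) <= c.
Proof.
move=> convSP c_ub Sx0.
have [[g /lagrangian_system_sat[g_ge0 g_dual]]|infeasible] :=
  pselect (exists g, all (sat g) (lagrangian_system c)); first by exists g.
have [g|c' c'_lt0 cone_c'] := @farkas _ _ (lagrangian_system c).
  by apply/negP => g_sat; apply: infeasible; exists g.
by have := lagrangian_system_cone_ge0 convSP c_ub Sx0 cone_c'; rewrite leNgt c'_lt0.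
Qed.

End LagrangianDuality.

Unset Implicit Arguments.

Theorem proposition9 (R : realType) (n m : nat)
  (S : 'cV[R]_n -> Prop) (M : 'M[R]_(m, n)) (b : 'cV[R]_m) :
  binary_set S -> comonotone S ->
  (forall x, conv (fun y => S y /\ polyhedron M b y) x <-> conv S x /\ polyhedron M b x) ->
  forall v : 'cV[R]_n,
  exists gamma : 'cV[R]_m, (forall i, 0 <= gamma i 0) /\
    forall xbar : 'cV[R]_n,
      is_argmax (fun y => S y /\ polyhedron M b y) v xbar <->
      ((S xbar /\ polyhedron M b xbar) /\ polyEq M b gamma xbar /\
       is_argmax S (v - M^T *m gamma) xbar).
Proof.
move=> binS _ hull v.
pose sS := [seq x <- binary_vectors R n | `[< S x >]].
have memS x : S x <-> x \in sS.
  rewrite mem_filter; split=> [Sx|/andP[/asboolP //]].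
  by rewrite (binary_vectors_mem binS Sx) andbT; apply/asboolP.
have [[x0 Xx0]|noX] := pselect (exists x, S x /\ polyhedron M b x); last first.
  exists 0; split=> [i|xbar]; first by rewrite mxE.
  by split=> [[Xxbar _]|[Xxbar _]]; case: noX; exists xbar.
have [xs [Xxs xs_max]] := finite_argmax v (fun x (Xx : S x /\ _) => (memS x).1 Xx.1) Xx0.
have [g g_ge0 g_dual] := lagrangian_dual_feasible memS
  (fun x Sx Px => (hull x).2 (conj Sx Px)) xs_max Xx0.1.
exists g; split=> // xbar; split=> [[Xxbar xbar_max]|[Xxbar [gxbar xbar_max]]].
  have xs_xbar : dotv v xs = dotv v xbar by apply/le_anti; rewrite xbar_max ?xs_max.
  by split=> //; apply: lagrangian_argmax_necessary; rewrite // -xs_xbar.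
exact: lagrangian_argmax_sufficient.
Qed.
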